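(* Let $\mathbf{X}=(X;f,\preccurlyeq,\tau)$ be a Priestley space $(X;\preccurlyeq,\tau)$ endowed with a map $f\colon X\to X$ that is an order-reversing homeomorphism of order two (i.e. $f(f(x))=x$ for all $x\in X$). Choose a subset $Y\subseteq X$ satisfying: (a) every $x\in X$ with $f(x)=x$ belongs to $Y$; (b) for every $x\in X$ with $x\neq f(x)$, exactly one of $x$, $f(x)$ belongs to $Y$. Then the system $$\sigma=\{Z\subseteq Y\mid Z\cup f(Z)\text{ is open in } (X,\tau)\}$$ is a topology on $Y$, and $(Y,\sigma)$ is a Boolean space (i.e. compact, Hausdorff and having a basis of clopen sets).
   Context: A Priestley space is a compact ordered topological space $(X;\preccurlyeq,\tau)$ such that whenever $x\not\preccurlyeq y$ there is a clopen up-set containing $x$ but not $y$. An order-reversing map $f$ satisfies $x\preccurlyeq y\Rightarrow f(y)\preccurlyeq f(x)$. *)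

From HB Require Import structures.
From mathcomp Require Import all_boot all_order.
From mathcomp Require Import classical_sets boolp cardinality topology.
Set Implicit Arguments. Unset Strict Implicit. Unset Printing Implicit Defensive.
Local Open Scope classical_set_scope.

Definition partial_order {X : Type} (le : X -> X -> Prop) : Prop :=
  (forall x, le x x) /\
  (forall x y, le x y -> le y x -> x = y) /\
  (forall x y z, le x y -> le y z -> le x z).

Definition up_set {X : Type} (le : X -> X -> Prop) (U : set X) : Prop :=
  forall x y, U x -> le x y -> U y.

Definition priestley_space {X : topologicalType} (le : X -> X -> Prop) : Prop :=
  partial_order le /\ compact [set: X] /\
  (forall x y, ~ le x y ->
     exists U : set X, clopen U /\ up_set le U /\ U x /\ ~ U y).

Definition order_reversing {X : Type} (le : X -> X -> Prop) (f : X -> X) : Prop :=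
  forall x y, le x y -> le (f y) (f x).

Definition homeomorphism {X : topologicalType} (f : X -> X) : Prop :=
  continuous f /\ exists g : X -> X,
    continuous g /\ (forall x, g (f x) = x) /\ (forall x, f (g x) = x).

Definition is_topology_on {T : Type} (Y : set T) (O : set (set T)) : Prop :=
  (forall Z, O Z -> Z `<=` Y) /\ O set0 /\ O Y /\
  (forall G : set (set T), G `<=` O -> O (\bigcup_(A in G) A)) /\
  (forall A B, O A -> O B -> O (A `&` B)).

Definition compact_on {T : Type} (Y : set T) (O : set (set T)) : Prop :=
  forall G : set (set T), G `<=` O -> Y `<=` \bigcup_(A in G) A ->
    exists F : set (set T), [/\ finite_set F, F `<=` G & Y `<=` \bigcup_(A in F) A].

Definition hausdorff_on {T : Type} (Y : set T) (O : set (set T)) : Prop :=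
  forall x y, Y x -> Y y -> x <> y ->
    exists U V, [/\ O U, O V, U x, V y & U `&` V = set0].

Definition clopen_basis_on {T : Type} (Y : set T) (O : set (set T)) : Prop :=
  forall Z, O Z -> forall y, Z y ->
    exists B, [/\ O B, O (Y `\` B), B y & B `<=` Z].

Definition boolean_space_on {T : Type} (Y : set T) (O : set (set T)) : Prop :=
  [/\ compact_on Y O, hausdorff_on Y O & clopen_basis_on Y O].

From HB Require Import structures.
From mathcomp Require Import all_boot all_order.
From mathcomp Require Import classical_sets boolp cardinality topology.
Local Open Scope classical_set_scope.

(* The map Z |-> Z `|` f @` Z is a lattice isomorphism from the subsets of Y
   onto the f-stable subsets of X, with inverse W |-> W `&` Y, and it turns
   complements relative to Y into complements in X.  So (Y, sigma) is the orbit
   space of the involution f, and it inherits compactness from X.  Every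
   stable open set is a union of stable clopen sets C `|` f @^-1` C, which gives
   the clopen basis and the Hausdorff property. *)

(* [compact_cover] is stated for pointed spaces only. *)
Definition pointed_at {T : topologicalType} (x : T) : Type := T.
HB.instance Definition _ (T : topologicalType) (x : T) :=
  Topological.copy (pointed_at x) T.
HB.instance Definition _ (T : topologicalType) (x : T) :=
  isPointed.Build (pointed_at x) x.

Section FiniteSubcover.
Import finmap.

Lemma compact_finite_subcover {T : topologicalType} {A : set T}
    {I : choiceType} {D : set I} {F : I -> set T} :
  compact A -> (forall i, D i -> open (F i)) ->
  A `<=` \bigcup_(i in D) F i ->
  exists E : set I, [/\ finite_set E, E `<=` D & A `<=` \bigcup_(i in E) F i].
Proof.
move=> cA oF AF; have [[x _]|T0] := pselect (exists x : T, True); last first.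
  exists set0; split; [exact: finite_set0 | by [] |].
  by move=> x; case: T0; exists x.
have : compact (A : set (pointed_at x)) by [].
rewrite compact_cover => /(_ I D F oF AF) [E ED AE].
exists [set` E]; split; [exact: finite_fset | | by []].
by move=> i /ED; rewrite in_setE.
Qed.

End FiniteSubcover.

Lemma zero_dimensional_hausdorff {T : topologicalType} :
  zero_dimensional T -> hausdorff_space T.
Proof.
move=> zdT; rewrite open_hausdorff => x y /zdT [C [[oC cC] Cx Cy]].
exists (C, ~` C); first by rewrite !inE.
by split => //=; [exact: closed_openC | apply/eqP; rewrite setICr].
Qed.

Lemma compact_zero_dimensional_clopen_nbhs {T : topologicalType}
    {O : set T} {x : T} :
  compact [set: T] -> zero_dimensional T -> open O -> O x ->
  exists C, [/\ clopen C, C x & C `<=` O].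
Proof.
move=> cT zdT oO Ox.
have := zero_dimensional_cvg (x := x) (zero_dimensional_hausdorff zdT) zdT cT.
by move=> /(_ O (open_nbhs_nbhs (conj oO Ox))) [C [Cx cC] CO]; exists C.
Qed.

Lemma priestley_zero_dimensional {X : topologicalType} {le : X -> X -> Prop} :
  priestley_space le -> zero_dimensional X.
Proof.
move=> [[_ [le_anti _]] [_ sep]] a b /eqP ab.
have [lab|nlab] := pselect (le a b); last first.
  by have [U [cU [_ [Ua Ub]]]] := sep _ _ nlab; exists U.
have nlba : ~ le b a by move=> lba; apply: ab; exact: le_anti.
have [U [cU [_ [Ub Ua]]]] := sep _ _ nlba.
by exists (~` U); split => //; exact: clopenC.
Qed.

Section InvolutionSelection.
Variables (X : topologicalType) (f : X -> X) (Y : set X).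
Hypothesis fK : involutive f.
Hypothesis fixed_sel : forall x, f x = x -> Y x.
Hypothesis orbit_sel : forall x, x <> f x -> (Y x <-> ~ Y (f x)).

Definition saturation (Z : set X) : set X := Z `|` f @` Z.

Definition stable (W : set X) : Prop := forall x, W x -> W (f x).

Definition selection_topology : set (set X) :=
  [set Z | Z `<=` Y /\ open (saturation Z)].

Lemma selection_fixed {x} : Y x -> Y (f x) -> f x = x.
Proof.
move=> Yx Yfx; apply: contrapT => fxx.
exact: (orbit_sel _ (nesym fxx)).1 Yx Yfx.
Qed.

Lemma selection_total x : Y x \/ Y (f x).
Proof.
have [Yx|nYx] := pselect (Y x); [by left | right].
have [xfx|xfx] := pselect (x = f x).
  by rewrite -xfx; exact: fixed_sel _ (esym xfx).
by apply: contrapT => nYfx; apply: nYx; exact/(orbit_sel _ xfx).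
Qed.

Lemma stable_saturation Z : stable (saturation Z).
Proof. by move=> x [Zx|[z Zz <-]]; [right; exists x | left; rewrite fK]. Qed.

Lemma stableC {W} : stable W -> stable (~` W).
Proof. by move=> sW x nWx Wfx; apply: nWx; rewrite -[x]fK; exact: sW. Qed.

Lemma saturationS {Z1 Z2} : Z1 `<=` Z2 -> saturation Z1 `<=` saturation Z2.
Proof. by move=> Z12; apply: setUSS => //; exact: image_subset. Qed.

Lemma saturationIY {Z} : Z `<=` Y -> saturation Z `&` Y = Z.
Proof.
move=> ZY; apply/seteqP; split => [x [[//|[z Zz <-]] Yfz]|x Zx].
  by rewrite (selection_fixed (ZY _ Zz) Yfz).
by split; [left | exact: ZY].
Qed.

Lemma saturation_stableIY {W} : stable W -> saturation (W `&` Y) = W.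
Proof.
move=> sW; apply/seteqP; split => [x [[]//|[z [Wz _] <-]]|x Wx].
  exact: sW.
have [Yx|Yfx] := selection_total x; first by left.
by right; exists (f x); [split => //; exact: sW | exact: fK].
Qed.

Lemma saturation0 : saturation set0 = set0.
Proof. by rewrite /saturation image_set0 setU0. Qed.

Lemma saturationY : saturation Y = [set: X].
Proof. by rewrite -[Y]setTI saturation_stableIY. Qed.

Lemma saturation_bigcup (G : set (set X)) :
  saturation (\bigcup_(A in G) A) = \bigcup_(A in G) saturation A.
Proof. by rewrite /saturation image_bigcup bigcupU. Qed.

Lemma saturationI {Z1 Z2} : Z1 `<=` Y -> Z2 `<=` Y ->
  saturation (Z1 `&` Z2) = saturation Z1 `&` saturation Z2.
Proof.
move=> Z1Y Z2Y; rewrite -[RHS]saturation_stableIY; last first.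
  by move=> x [S1x S2x]; split; exact: stable_saturation.
have -> : saturation Z1 `&` saturation Z2 `&` Y =
    (saturation Z1 `&` Y) `&` (saturation Z2 `&` Y) by rewrite setIACA setIid.
by rewrite !saturationIY.
Qed.

Lemma selection_is_topology : is_topology_on Y selection_topology.
Proof.
split; [by move=> Z [] | split; [| split; [| split]]].
- by split; [exact: sub0set | rewrite saturation0; exact: open0].
- by split => //; rewrite saturationY; exact: openT.
- move=> G GS; split; first by move=> x [A /GS [AY _] /AY].
  by rewrite saturation_bigcup; apply: bigcup_open => A /GS [].
- move=> A B [AY oA] [BY oB]; split; first by move=> x [/AY].
  by rewrite saturationI //; exact: openI.
Qed.

Lemma selection_open_stable {W} :
  open W -> stable W -> selection_topology (W `&` Y).
Proof.
by move=> oW sW; split; [exact: subIsetr | rewrite saturation_stableIY].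
Qed.

Lemma selection_clopen_stable {W} : clopen W -> stable W ->
  selection_topology (W `&` Y) /\ selection_topology (Y `\` (W `&` Y)).
Proof.
move=> [oW cW] sW; split; first exact: selection_open_stable.
rewrite setDIr setDv setU0 setDE setIC.
by apply: selection_open_stable; [exact: closed_openC | exact: stableC].
Qed.

Hypothesis f_cont : continuous f.
Hypothesis X_compact : compact [set: X].
Hypothesis X_zd : zero_dimensional X.

Lemma stable_clopen_nbhs {O x} : open O -> stable O -> O x ->
  exists W, [/\ clopen W, stable W, W x & W `<=` O].
Proof.
move=> oO sO Ox.
have [C [cC Cx CO]] :=
  compact_zero_dimensional_clopen_nbhs X_compact X_zd oO Ox.
exists (C `|` f @^-1` C); split.
- by apply: clopenU => //; exact: preimage_clopen.
- by move=> y [Cy|Cfy]; [right; rewrite /= fK | left].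
- by left.
- by move=> y [/CO //|/CO/sO]; rewrite fK.
Qed.

Lemma selection_clopen_basis : clopen_basis_on Y selection_topology.
Proof.
move=> Z [ZY oZ] y Zy.
have [W [cW sW Wy WZ]] :=
  stable_clopen_nbhs oZ (@stable_saturation Z) (or_introl Zy).
have [sWY sYW] := selection_clopen_stable cW sW.
exists (W `&` Y); split => //; first by split => //; exact: ZY.
by rewrite -[X in _ `<=` X](saturationIY ZY); exact: setSI.
Qed.

Lemma selection_hausdorff : hausdorff_on Y selection_topology.
Proof.
move=> x y Yx Yy xy.
have yY : [set y] `<=` Y by move=> _ ->.
have oS : open (~` saturation [set y]).
  apply: closed_openC; rewrite /saturation image_set1.
  have T1 := hausdorff_accessible (zero_dimensional_hausdorff X_zd).
  by apply: closedU; exact: accessible_closed_set1.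
have nSx : ~ saturation [set y] x.
  move=> Sx; apply: xy; have : (saturation [set y] `&` Y) x by [].
  by rewrite saturationIY.
have [W [cW sW Wx WS]] :=
  stable_clopen_nbhs oS (stableC (@stable_saturation [set y])) nSx.
have [sWY sYW] := selection_clopen_stable cW sW.
exists (W `&` Y), (Y `\` (W `&` Y)); split => //; last exact: setDIK.
by split => // -[/WS + _]; apply; left.
Qed.

Lemma selection_compact : compact_on Y selection_topology.
Proof.
move=> G GS YG.
have XG : [set: X] `<=` \bigcup_(A in G) saturation A.
  by rewrite -saturation_bigcup -saturationY; exact: saturationS.
have [E [finE EG XE]] :=
  compact_finite_subcover X_compact (fun A GA => (GS A GA).2) XG.
exists E; split => // y Yy; have /XE [A EA Ay] : [set: X] y by [].
by exists A => //; rewrite -(saturationIY (GS A (EG A EA)).1).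
Qed.

End InvolutionSelection.

Theorem mainTheorem1 (X : topologicalType) (le : X -> X -> Prop) (f : X -> X)
  (Y : set X) :
  priestley_space le ->
  order_reversing le f ->
  homeomorphism f ->
  (forall x, f (f x) = x) ->
  (forall x, f x = x -> Y x) ->
  (forall x, x <> f x -> (Y x <-> ~ Y (f x))) ->
  let sigma := [set Z : set X | Z `<=` Y /\ open (Z `|` f @` Z)] in
  is_topology_on Y sigma /\ boolean_space_on Y sigma.
Proof.
move=> P _ [f_cont _] fK fixed_sel orbit_sel sigma.
have X_compact : compact [set: X] := P.2.1.
have X_zd := priestley_zero_dimensional P.
split; first exact: selection_is_topology.
split; [exact: selection_compact | exact: selection_hausdorff |
        exact: selection_clopen_basis].
Qed.
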